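(* For any $q\ge 1$, the simplicial complex $\mathbb{M}_q^2$ is a simplicial tree.
   Context: $\mathbb{M}_q^2$: vertex set $\{\ell_{i,j}:1\le i\le j\le q\}$, $\mathcal{M}=\{\ell_{i,j}:1\le i<j\le q\}$, $\mathcal{M}_i=\mathcal{M}\cup\{\ell_{i,i}\}$, and $\mathbb{M}_q^2$ is the simplicial complex whose facets are $\mathcal{M}_1,\ldots,\mathcal{M}_q$. A subcollection of a simplicial complex $\Delta$ is a subcomplex whose facets are facets of $\Delta$. $\Delta$ is connected if any two facets $F,G$ are joined by a sequence of facets $F=F_0,\ldots,F_r=G$ with $F_{k-1}\cap F_k\neq\emptyset$. A facet $F$ is a leaf if it is the only facet, or there is a facet $G\neq F$ with $F\cap H\subseteq G$ for all facets $H\neq F$. $\Delta$ is a simplicial forest if every subcollection has a leaf, and a simplicial tree if it is a connected simplicial forest. *)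

From mathcomp Require Import all_boot.
Set Implicit Arguments. Unset Strict Implicit. Unset Printing Implicit Defensive.

(* A simplicial complex on a finite vertex type V is represented by its
   set of facets D : {set {set V}}. *)
Section SimplicialTrees.
Variable V : finType.

Definition subcollection (D S : {set {set V}}) : bool :=
  (S \subset D) && (S != set0).

Definition facet_adj (D : {set {set V}}) : rel {set V} :=
  fun F G => [&& F \in D, G \in D & F :&: G != set0].

Definition sc_connected (D : {set {set V}}) : Prop :=
  forall F G, F \in D -> G \in D -> connect (facet_adj D) F G.

Definition is_leaf (D : {set {set V}}) (F : {set V}) : Prop :=
  F \in D /\
  (D = [set F] \/
   exists2 G, G \in D & G != F /\ (forall H, H \in D -> H != F -> F :&: H \subset G)).

Definition simplicial_forest (D : {set {set V}}) : Prop :=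
  forall S, subcollection D S -> exists F, is_leaf S F.

Definition simplicial_tree (D : {set {set V}}) : Prop :=
  sc_connected D /\ simplicial_forest D.

End SimplicialTrees.

(* The complex M_q^2.  Vertices l_{i,j} (1 <= i <= j <= q) are encoded
   0-indexed as pairs (i, j) : 'I_q * 'I_q with i <= j. *)
Definition Mset (q : nat) : {set 'I_q * 'I_q} := [set p : 'I_q * 'I_q | (p.1 < p.2)%N].

Definition Mfacet (q : nat) (i : 'I_q) : {set 'I_q * 'I_q} :=
  Mset q :|: [set (i, i)].

Definition M2 (q : nat) : {set {set 'I_q * 'I_q}} :=
  [set Mfacet i | i : 'I_q].

(* Any two distinct facets of M_q^2 meet exactly in the common part M, so the
   facets form a sunflower with core M.  In a sunflower, and in each of its
   subcollections, every facet F is a leaf: for another facet G and any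
   H != F, F :&: H = M = F :&: G is contained in G.  Distinct facets meet
   because M contains l_{i,j} whenever i < j. *)
From mathcomp Require Import all_boot.

Set Implicit Arguments.
Unset Strict Implicit.
Unset Printing Implicit Defensive.

Section Sunflowers.
Variable V : finType.
Implicit Types (D S : {set {set V}}) (C F G H : {set V}).

Definition sunflower D C : Prop :=
  forall F G, F \in D -> G \in D -> F != G -> F :&: G = C.

Lemma sunflowerS D S C : S \subset D -> sunflower D C -> sunflower S C.
Proof. by move=> /subsetP sSD sunD F G /sSD FD /sSD GD; apply: sunD. Qed.

Lemma sunflower_leaf S C F : sunflower S C -> F \in S -> is_leaf S F.
Proof.
move=> sunS FS; split=> //.
have [/exists_inP[G GS nGF] | noG] := boolP [exists G in S, G != F].
  right; exists G => //; split=> // H HS nHF.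
  by rewrite (sunS F H) // -?(sunS F G) ?subsetIr // eq_sym.
left; apply/setP=> G; rewrite in_set1.
apply/idP/eqP=> [GS | ->] //; apply/eqP; apply: contraNT noG => nGF.
by apply/exists_inP; exists G.
Qed.

Lemma sunflower_forest D C : sunflower D C -> simplicial_forest D.
Proof.
move=> sunD S /andP[sSD /set0Pn[F FS]]; exists F.
exact: sunflower_leaf (sunflowerS sSD sunD) FS.
Qed.

Lemma connected_pairwise_meet D :
  (forall F G, F \in D -> G \in D -> F != G -> F :&: G != set0) ->
  sc_connected D.
Proof.
move=> meetD F G FD GD; have [-> | nFG] := eqVneq F G; first exact: connect0.
by apply: connect1; rewrite /facet_adj FD GD meetD.
Qed.

End Sunflowers.

Section ComplexM2.
Variable q : nat.
Implicit Types i j : 'I_q.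

Lemma Mfacet_setI i j : i != j -> Mfacet i :&: Mfacet j = Mset q.
Proof.
move=> nij; apply/setP=> x; rewrite !inE.
case: (x.1 < x.2)%N => //=; case: eqP => [-> | //].
by apply/negbTE; apply: contra nij => /eqP[->].
Qed.

Lemma Mset_neq0 i j : i != j -> Mset q != set0.
Proof.
move=> nij; apply/set0Pn.
have [lt_ij | lt_ji | /val_inj eq_ij] := ltngtP i j.
- by exists (i, j); rewrite inE.
- by exists (j, i); rewrite inE.
- by rewrite eq_ij eqxx in nij.
Qed.

Lemma M2_sunflower : sunflower (M2 q) (Mset q).
Proof.
move=> _ _ /imsetP[i _ ->] /imsetP[j _ ->] nFG.
by apply: Mfacet_setI; apply: contraNneq nFG => ->.
Qed.

Lemma M2_connected : sc_connected (M2 q).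
Proof.
apply: connected_pairwise_meet => _ _ /imsetP[i _ ->] /imsetP[j _ ->] nFG.
have nij : i != j by apply: contraNneq nFG => ->.
by rewrite Mfacet_setI // (Mset_neq0 nij).
Qed.

End ComplexM2.

Theorem proposition3p3 (q : nat) : 1 <= q -> simplicial_tree (M2 q).
Proof.
move=> _; split; first exact: M2_connected.
exact: sunflower_forest (@M2_sunflower q).
Qed.
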